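(* Let $B$ be an $n \times n$ matrix with integer coefficients, let $e_n = (0,\dots,0,1)^T \in \mathbb{R}^n$, and let $q(t) = \det\left(B - tI + t\, e_n e_n^*\right) = \sum_i q_i t^i$. Then \[ \max_i |q_i| \le 2\left(2\sqrt{n}\,\max_{i,j}|B_{ij}|\right)^n. \] *)

From mathcomp Require Import all_boot all_order all_algebra.
From mathcomp Require Import reals.
Set Implicit Arguments. Unset Strict Implicit. Unset Printing Implicit Defensive.
Import Order.TTheory GRing.Theory Num.Theory.
Local Open Scope ring_scope.

(* q(t) = det (B - t I + t e_n e_n^T), as a polynomial with integer coefficients,
   for B an n x n integer matrix with n = m.+1 (so that e_n exists). *)
Definition qdet_poly (m : nat) (B : 'M[int]_m.+1) : {poly int} :=
  \det (map_mx polyC B - 'X *: (1%:M : 'M[{poly int}]_m.+1)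
        + 'X *: delta_mx ord_max ord_max).

Definition maxentry (m : nat) (B : 'M[int]_m.+1) : int :=
  \big[Num.max/0]_(i < m.+1) \big[Num.max/0]_(j < m.+1) `|B i j|.

From mathcomp Require Import all_boot all_order all_algebra.
From mathcomp Require Import reals.
Set Implicit Arguments. Unset Strict Implicit. Unset Printing Implicit Defensive.
Import Order.TTheory GRing.Theory Num.Theory.
Local Open Scope ring_scope.

(* Choosing, row by row, between the two summands of B - t (I - e_n e_n^T)
   expands q(t) as the sum over S of (-t)^|S| det C_S, where C_S takes its
   rows indexed by S from I - e_n e_n^T and the others from B.  Hence every
   |q_i| is at most the sum of the 2^n numbers |det C_S|.  The entries of C_S
   are bounded by max |B_ij| (when B = 0 the last row of C_S vanishes), so
   Hadamard's inequality bounds each |det C_S| by (sqrt n max |B_ij|)^n.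

   Hadamard's inequality det (A A^T) <= prod_i (A A^T)_ii is proved by
   induction on the rows of A: the Schur complement of the first diagonal
   entry of a Gram matrix is the Gram matrix of the other rows projected
   orthogonally to the first one, and projecting only shrinks the diagonal. *)

Section Gram.
Variable R : realFieldType.

Lemma gram_diag_ge0 n k (A : 'M[R]_(n, k)) i : 0 <= (A *m A^T) i i.
Proof. by rewrite mxE; apply: sumr_ge0 => j _; rewrite mxE -expr2 sqr_ge0. Qed.

Lemma gram_rV_eq0 k (a : 'rV[R]_k) : (a *m a^T) 0 0 = 0 -> a = 0.
Proof.
rewrite mxE; under eq_bigr => l _ do rewrite mxE -expr2.
move=> /(psumr_eq0P (fun l _ => sqr_ge0 (a 0 l))) a0.
by apply/matrixP => i j; apply/eqP; rewrite ord1 mxE -sqrf_eq0 a0.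
Qed.

Lemma gram_col_mx m n k (a : 'M[R]_(m, k)) (A : 'M[R]_(n, k)) :
  col_mx a A *m (col_mx a A)^T = block_mx (a *m a^T) (a *m A^T) (A *m a^T) (A *m A^T).
Proof. by rewrite tr_col_mx mul_col_mx !mul_mx_row. Qed.

Lemma det_block1_schur n (c : R) (U : 'M[R]_(1, n)) (V : 'M[R]_(n, 1)) D :
  c != 0 -> \det (block_mx c%:M U V D) = c * \det (D - c^-1 *: (V *m U)).
Proof.
move=> c0.
have -> : block_mx c%:M U V D =
    block_mx 1%:M 0 (c^-1 *: V) 1%:M *m block_mx c%:M U 0 (D - c^-1 *: (V *m U)).
  rewrite mulmx_block !mul1mx !mul0mx !addr0 mul_mx_scalar scalerA mulfV //.
  by rewrite scale1r -scalemxAl addrC subrK.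
by rewrite det_mulmx det_lblock det_ublock !det1 det_scalar1 !mul1r.
Qed.

Lemma gram_schur_compl n k (a : 'rV[R]_k) (A : 'M[R]_(n, k)) (c := (a *m a^T) 0 0) :
  c != 0 -> exists B : 'M_(n, k),
    A *m A^T - c^-1 *: (A *m a^T *m (a *m A^T)) = B *m B^T.
Proof.
move=> c0; pose P := 1%:M - c^-1 *: (a^T *m a); exists (A *m P).
have ac : a *m a^T = c%:M by exact: mx11_scalar.
have PT : P^T = P by rewrite /P linearB /= linearZ /= trmx_mul trmxK trmx1.
have PP : P *m P = P.
  rewrite /P mulmxBl mul1mx mulmxBr mulmx1 -scalemxAl -scalemxAr scalerA.
  rewrite -mulmxA (mulmxA a) ac mul_scalar_mx -scalemxAr scalerA -mulrA mulVf //.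
  by rewrite mulr1 subrr subr0.
rewrite trmx_mul PT !mulmxA -(mulmxA A P P) PP /P mulmxBr mulmx1 -scalemxAr mulmxBl.
by rewrite -scalemxAl !mulmxA.
Qed.

Lemma gram_det_col_mx n k (a : 'rV[R]_k) (A : 'M[R]_(n, k)) :
  (forall B : 'M[R]_(n, k), \det (B *m B^T) <= \prod_i (B *m B^T) i i) ->
  \det (col_mx a A *m (col_mx a A)^T)
    <= \prod_i (col_mx a A *m (col_mx a A)^T) i i.
Proof.
move=> IH; rewrite gram_col_mx big_split_ord /= big_ord1 block_mxEul.
under eq_bigr => i _ do rewrite block_mxEdr.
set c := (a *m a^T) 0 0; have c_ge0 : 0 <= c by apply: gram_diag_ge0.
have [c0|c_neq0] := eqVneq c 0.
  have -> : a = 0 by apply: gram_rV_eq0.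
  rewrite !mul0mx det_lblock (det_mx11 0) mxE mul0r.
  by rewrite mulr_ge0 // prodr_ge0 // => i _; apply: gram_diag_ge0.
rewrite [a *m a^T]mx11_scalar -/c det_block1_schur //.
have [B SB] := gram_schur_compl A c_neq0.
rewrite SB ler_pM2l ?lt_def ?c_neq0 //; apply: le_trans (IH B) _.
apply: ler_prod => i _; rewrite gram_diag_ge0 /= -SB.
rewrite -[a *m A^T]trmxK trmx_mul trmxK; set w := A *m a^T.
rewrite -/c !mxE gerBl mulr_ge0 ?invr_ge0 // big_ord1.
by rewrite [w^T _ _]mxE -expr2 sqr_ge0.
Qed.

Lemma gram_det_le_prod_diag n k (A : 'M[R]_(n, k)) :
  \det (A *m A^T) <= \prod_i (A *m A^T) i i.
Proof.
elim: n A => [|n IH] A; first by rewrite det_mx00 big_ord0.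
have -> : A = col_mx (usubmx (A : 'M_(1 + n, k))) (dsubmx (A : 'M_(1 + n, k))).
  by rewrite vsubmxK.
exact: gram_det_col_mx.
Qed.

Lemma hadamard n (A : 'M[R]_n) : \det A ^+ 2 <= \prod_i \sum_j A i j ^+ 2.
Proof.
rewrite expr2 -{2}det_tr -det_mulmx.
suff -> : \prod_i \sum_j A i j ^+ 2 = \prod_i (A *m A^T) i i.
  exact: gram_det_le_prod_diag.
by apply: eq_bigr => i _; rewrite mxE; apply: eq_bigr => j _; rewrite mxE expr2.
Qed.

End Gram.

Lemma norm_det_le_entry_bound (R : rcfType) n (A : 'M[R]_n) (M : R) :
  (forall i j, `|A i j| <= M) -> `|\det A| <= (Num.sqrt n%:R * M) ^+ n.
Proof.
case: n A => [|n] A AM; first by rewrite det_mx00 normr1 expr0.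
have M_ge0 : 0 <= M by apply: le_trans (AM 0 0); apply: normr_ge0.
suff det2 : \det A ^+ 2 <= ((Num.sqrt n.+1%:R * M) ^+ n.+1) ^+ 2.
  rewrite -ler_sqr ?nnegrE ?normr_ge0 ?exprn_ge0 ?mulr_ge0 ?sqrtr_ge0 //.
  by rewrite real_normK ?num_real.
rewrite (exprAC _ n.+1 2) (exprMn 2 (Num.sqrt _) M) sqr_sqrtr ?ler0n //.
have -> : (n.+1%:R * M ^+ 2) ^+ n.+1 = \prod_(i < n.+1) \sum_(j < n.+1) M ^+ 2.
  by rewrite prodr_const sumr_const !card_ord mulr_natl.
apply: le_trans (hadamard A) _.
apply: ler_prod => i _; rewrite sumr_ge0 => [|j _]; last exact: sqr_ge0.
apply: ler_sum => j _.
by rewrite -real_normK ?num_real // lerXn2r ?nnegrE ?normr_ge0.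
Qed.

Definition row_merge (T : Type) m n (S : {set 'I_m}) (A B : 'M[T]_(m, n)) :=
  \matrix_(i, j) if i \in S then A i j else B i j.

Lemma map_row_merge (aT rT : Type) (f : aT -> rT) m n S (A B : 'M[aT]_(m, n)) :
  map_mx f (row_merge S A B) = row_merge S (map_mx f A) (map_mx f B).
Proof. by apply/matrixP => i j; rewrite !mxE; case: ifP. Qed.

Lemma det_add_row_merge (R : comRingType) n (A B : 'M[R]_n) :
  \det (A + B) = \sum_(S : {set 'I_n}) \det (row_merge S A B).
Proof.
rewrite /determinant.
under eq_bigr => s _ do under eq_bigr => i _ do rewrite mxE.
under eq_bigr => s _ do rewrite bigA_distr big_distrr.
rewrite exchange_big /=; apply: eq_bigr => S _; apply: eq_bigr => s _.
by congr (_ * _); apply: eq_bigr => i _; rewrite !mxE.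
Qed.

Lemma det_row_merge_scale (R : comRingType) n S c (A B : 'M[R]_n) :
  \det (row_merge S (c *: A) B) = c ^+ #|S| * \det (row_merge S A B).
Proof.
have -> : row_merge S (c *: A) B =
    diag_mx (\row_i if i \in S then c else 1) *m row_merge S A B.
  by apply/matrixP => i j; rewrite mul_diag_mx !mxE; case: (i \in S); rewrite ?mul1r.
rewrite det_mulmx det_diag; congr (_ * _).
under eq_bigr => i _ do rewrite mxE.
by rewrite -big_mkcond prodr_const.
Qed.

Lemma norm_coef_signed_monomial (R : numDomainType) k (c : R) i :
  `|((- 'X) ^+ k * c%:P)`_i| <= `|c|.
Proof.
rewrite exprNn -signr_odd -mulrA mulr_sign.
by case: (odd k); rewrite ?coefN ?normrN coefMC coefXn normrM ler_piMl ?normr_nat ?lern1 ?leq_b1.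
Qed.

Lemma qdet_poly_expand m (B : 'M[int]_m.+1) :
  qdet_poly B = \sum_(S : {set 'I_m.+1})
    (- 'X) ^+ #|S| * (\det (row_merge S (1%:M - delta_mx ord_max ord_max) B))%:P.
Proof.
have -> : qdet_poly B = \det ((- 'X) *: map_mx polyC (1%:M - delta_mx ord_max ord_max)
                               + map_mx polyC B).
  rewrite map_mxB map_mx1 map_delta_mx scalerBr !scaleNr opprK.
  by rewrite [_ + map_mx _ _]addrC addrA.
rewrite det_add_row_merge; apply: eq_bigr => S _.
by rewrite det_row_merge_scale -map_row_merge det_map_mx.
Qed.

Lemma norm_coef_qdet_poly m (B : 'M[int]_m.+1) i :
  `|(qdet_poly B)`_i|
    <= \sum_(S : {set 'I_m.+1}) `|\det (row_merge S (1%:M - delta_mx ord_max ord_max) B)|.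
Proof.
rewrite qdet_poly_expand coef_sum; apply: le_trans (ler_norm_sum _ _ _) _.
by apply: ler_sum => S _; apply: norm_coef_signed_monomial.
Qed.

Lemma le_maxentry m (B : 'M[int]_m.+1) i j : `|B i j| <= maxentry B.
Proof.
apply: le_trans (le_bigmax _ _ i).
exact: (le_bigmax _ (fun j => `|B i j|) j).
Qed.

Lemma norm_det_row_merge_le (R : rcfType) m (B : 'M[int]_m.+1) S :
  (`|\det (row_merge S (1%:M - delta_mx ord_max ord_max) B)|%:~R : R)
    <= (Num.sqrt (m.+1)%:R * (maxentry B)%:~R) ^+ m.+1.
Proof.
set C := row_merge S _ B.
have [M0|M_neq0] := eqVneq (maxentry B) 0.
  suff -> : \det C = 0 by rewrite normr0 M0 mulr0 expr0n.
  rewrite (expand_det_row _ ord_max) big1 // => j _.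
  rewrite !mxE eqxx /=; case: ifP => _; first by rewrite eq_sym subrr mul0r.
  by apply/eqP; rewrite mulf_eq0 -normr_le0 -M0 le_maxentry.
rewrite intr_norm -det_map_mx; apply: norm_det_le_entry_bound => i j.
rewrite mxE -intr_norm ler_int !mxE; case: ifP => _; last exact: le_maxentry.
have M_ge1 : 1 <= maxentry B.
  by rewrite -gtz0_ge1 lt_def M_neq0 (le_trans _ (le_maxentry B 0 0)).
by apply: le_trans M_ge1; case: (i == j); case: (_ && _).
Qed.

Theorem lemma3 (R : realType) (m : nat) (B : 'M[int]_m.+1) :
  \big[Num.max/0]_(i < (size (qdet_poly B)).+1) ((`|(qdet_poly B)`_i|)%:~R : R)
    <= 2 * (2 * Num.sqrt ((m.+1)%:R : R) * (maxentry B)%:~R) ^+ m.+1.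
Proof.
set K := Num.sqrt ((m.+1)%:R : R) * (maxentry B)%:~R.
have K_ge0 : 0 <= K.
  by rewrite mulr_ge0 ?sqrtr_ge0 // ler0z (le_trans _ (le_maxentry B 0 0)).
rewrite -mulrA -/K exprMn; apply: bigmax_le => [|i _]; first by rewrite !mulr_ge0 ?exprn_ge0.
apply: (@le_trans _ _ (\sum_(S : {set 'I_m.+1}) K ^+ m.+1)).
  apply: le_trans (ler_sum _ (fun S _ => norm_det_row_merge_le R B S)).
  by rewrite -rmorph_sum ler_int norm_coef_qdet_poly.
rewrite sumr_const -cardsT -powersetT card_powerset cardsT card_ord.
rewrite -[_ *+ _]mulr_natl natrX.
by rewrite ler_peMl ?mulr_ge0 ?exprn_ge0 ?ler1n.
Qed.
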